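(* Let $\alpha,\beta>0$, let $c(\psi)=\sqrt{\alpha\cos^2\psi+\beta\sin^2\psi}$, let $p\ge0$ be an integer, let $C>0$ and $\theta\ge1/2$, and let $X_{\Delta x}^p(\Omega)$ be the discontinuous piecewise polynomial space on the periodic mesh described in the context. Suppose $v,w,\psi:[0,T]\to X_{\Delta x}^p(\Omega)$ are differentiable in time and, for every $t\in[0,T]$, satisfy (with $c=c(\psi(x,t))$ inside integrals, $x$-derivatives taken cellwise, sums over $j=1,\dots,N$) $$\sum_j\int_{\Omega_j}v_t\phi\,dx+\sum_j\int_{\Omega_j}c\,w\phi_x\,dx-\sum_j\Big(\overline{c}_{j+1/2}\overline{w}_{j+1/2}+\tfrac12 s_{j+1/2}\llbracket v\rrbracket_{j+1/2}\Big)\phi^-_{j+1/2}+\sum_j\Big(\overline{c}_{j-1/2}\overline{w}_{j-1/2}+\tfrac12 s_{j-1/2}\llbracket v\rrbracket_{j-1/2}\Big)\phi^+_{j-1/2}$$ $$=\sum_j\int_{\Omega_j}c\,(w\phi)_x\,dx-\sum_j\overline{c}_{j+1/2}w^-_{j+1/2}\phi^-_{j+1/2}+\sum_j\overline{c}_{j-1/2}w^+_{j-1/2}\phi^+_{j-1/2}-\sum_j\varepsilon_j\int_{\Omega_j}v_x\phi_x\,dx$$ for all $\phi\in X_{\Delta x}^p(\Omega)$, $$\sum_j\int_{\Omega_j}w_t\eta\,dx+\sum_j\int_{\Omega_j}c\,v\eta_x\,dx-\sum_j\Big(\overline{c}_{j+1/2}\overline{v}_{j+1/2}+\tfrac12 s_{j+1/2}\llbracket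 w\rrbracket_{j+1/2}\Big)\eta^-_{j+1/2}+\sum_j\Big(\overline{c}_{j-1/2}\overline{v}_{j-1/2}+\tfrac12 s_{j-1/2}\llbracket w\rrbracket_{j-1/2}\Big)\eta^+_{j-1/2}=-\sum_j\varepsilon_j\int_{\Omega_j}w_x\eta_x\,dx$$ for all $\eta\in X_{\Delta x}^p(\Omega)$, and $\sum_j\int_{\Omega_j}\psi_t\zeta\,dx=\sum_j\int_{\Omega_j}v\zeta\,dx$ for all $\zeta\in X_{\Delta x}^p(\Omega)$. Here $s_{j+1/2}=\max\{c^-_{j+1/2},c^+_{j+1/2}\}$ and $$\varepsilon_j=\frac{\Delta x_j\,C\,\big(\int_{\Omega_j}\mathrm{Res}^2\,dx\big)^{1/2}}{\big(\int_{\Omega_j}(v_x^2+w_x^2)\,dx\big)^{1/2}+\Delta x_j^\theta},\qquad \mathrm{Res}=(v^2+w^2)_t-\big(2c(\psi)vw\big)_x.$$ Then $$\frac{d}{dt}\left(\sum_{j=1}^N\int_{\Omega_j}\frac{v^2+w^2}{2}\,dx\right)\le 0.$$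
   Context: The domain $\Omega$ is partitioned into cells $\Omega_j=[x_{j-1/2},x_{j+1/2}]$, $j=1,\dots,N$, with $\Delta x_j=x_{j+1/2}-x_{j-1/2}$. $X_{\Delta x}^p(\Omega)=\{u\in L^2(\Omega): u|_{\Omega_j}$ is a polynomial of degree $\le p$ for each $j\}$. For a grid function $u$, $u^+_{j+1/2}$ and $u^-_{j+1/2}$ denote its traces at $x_{j+1/2}$ from the right and left respectively; $\overline{u}_{j+1/2}=(u^+_{j+1/2}+u^-_{j+1/2})/2$ and $\llbracket u\rrbracket_{j+1/2}=u^+_{j+1/2}-u^-_{j+1/2}$. Also $c^\pm_{j+1/2}=c(\psi^\pm_{j+1/2})$ and $\overline{c}_{j+1/2}=(c^+_{j+1/2}+c^-_{j+1/2})/2$. Periodic boundary conditions: the endpoints $x_{1/2}$ and $x_{N+1/2}$ are identified, i.e. $u^-_{1/2}:=u^-_{N+1/2}$ (trace from cell $N$) and $u^+_{N+1/2}:=u^+_{1/2}$ (trace from cell $1$), for all grid functions including $\psi$ and the test functions. *)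

From HB Require Import structures.
From mathcomp Require Import all_boot all_order all_algebra.
From mathcomp Require Import all_classical all_reals all_analysis.
Set Implicit Arguments. Unset Strict Implicit. Unset Printing Implicit Defensive.
Import Order.TTheory GRing.Theory Num.Theory.
Import numFieldNormedType.Exports.
Local Open Scope classical_set_scope.
Local Open Scope ring_scope.

(* Mesh: nodes xn k = x_{k+1/2}, k = 0..N (0-based).  Cell j : 'I_N (0-based)
   is Omega_{j+1} = [xn j, xn j.+1]. *)

Definition cspeed (R : realType) (alpha beta psi : R) : R :=
  Num.sqrt (alpha * cos psi ^+ 2 + beta * sin psi ^+ 2).

Definition dx (R : realType) (N : nat) (xn : nat -> R) (j : 'I_N) : R :=
  xn j.+1 - xn j.

Definition cint (R : realType) (N : nat) (xn : nat -> R) (j : 'I_N) (f : R -> R) : R :=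
  Rintegral lebesgue_measure `[xn j, xn j.+1] f.

Definition inX (R : realType) (N p : nat) (u : 'I_N -> {poly R}) : Prop :=
  forall j, (size (u j) <= p.+1)%N.

(* Interface i : 'I_N denotes x_{i+1/2} (0-based), the right end of cell i;
   by periodicity the left end of cell j is interface (ord_pred j).
   Traces at interface i: minus from cell i, plus from cell (ordS i). *)
Definition trm (R : realType) (N : nat) (xn : nat -> R) (u : 'I_N -> {poly R}) (i : 'I_N) : R :=
  (u i).[xn i.+1].
Definition trp (R : realType) (N : nat) (xn : nat -> R) (u : 'I_N -> {poly R}) (i : 'I_N) : R :=
  (u (ordS i)).[xn (ordS i)].
Definition avg (R : realType) (N : nat) (xn : nat -> R) (u : 'I_N -> {poly R}) (i : 'I_N) : R :=
  (trp xn u i + trm xn u i) / 2.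
Definition jump (R : realType) (N : nat) (xn : nat -> R) (u : 'I_N -> {poly R}) (i : 'I_N) : R :=
  trp xn u i - trm xn u i.

Definition cbar (R : realType) (alpha beta : R) (N : nat) (xn : nat -> R)
  (psi : 'I_N -> {poly R}) (i : 'I_N) : R :=
  (cspeed alpha beta (trp xn psi i) + cspeed alpha beta (trm xn psi i)) / 2.
Definition sspeed (R : realType) (alpha beta : R) (N : nat) (xn : nat -> R)
  (psi : 'I_N -> {poly R}) (i : 'I_N) : R :=
  Num.max (cspeed alpha beta (trm xn psi i)) (cspeed alpha beta (trp xn psi i)).

Definition dt (R : realType) (N : nat) (u : R -> 'I_N -> {poly R}) (t : R) (j : 'I_N) (x : R) : R :=
  derive1 (fun s => (u s j).[x]) t.

Definition Res (R : realType) (alpha beta : R) (N : nat)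
  (v w psi : R -> 'I_N -> {poly R}) (t : R) (j : 'I_N) (x : R) : R :=
  derive1 (fun s => (v s j).[x] ^+ 2 + (w s j).[x] ^+ 2) t
  - derive1 (fun y => 2 * cspeed alpha beta (psi t j).[y] * (v t j).[y] * (w t j).[y]) x.

Definition eps (R : realType) (alpha beta C theta : R) (N : nat) (xn : nat -> R)
  (v w psi : R -> 'I_N -> {poly R}) (t : R) (j : 'I_N) : R :=
  dx xn j * C * Num.sqrt (cint xn j (fun x => Res alpha beta v w psi t j x ^+ 2))
  / (Num.sqrt (cint xn j (fun x => (deriv (v t j)).[x] ^+ 2 + (deriv (w t j)).[x] ^+ 2))
     + powR (dx xn j) theta).

Definition energy (R : realType) (N : nat) (xn : nat -> R) (v w : R -> 'I_N -> {poly R}) (t : R) : R :=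
  \sum_(j < N) cint xn j (fun x => ((v t j).[x] ^+ 2 + (w t j).[x] ^+ 2) / 2).

From HB Require Import structures.
From mathcomp Require Import all_boot all_order all_algebra.
From mathcomp Require Import all_classical all_reals all_analysis.
Import Order.TTheory GRing.Theory Num.Theory.
Import numFieldNormedType.Exports.
Local Open Scope classical_set_scope.
Local Open Scope ring_scope.
From mathcomp Require Import ring lra.

Set Implicit Arguments.
Unset Strict Implicit.
Unset Printing Implicit Defensive.

(* Test the v-equation with phi = v and the w-equation with eta = w and add.
   On each cell c w v_x + c v w_x = c (w v)_x, so the volume terms cancel. At
   each interface, after the periodic shift, the central parts of the fluxes
   cancel against the boundary terms and only -1/2 s ([v]^2 + [w]^2) <= 0
   survives, while the viscous terms give -eps_j int (v_x^2 + w_x^2) <= 0.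
   The left-hand side is the time derivative of the energy, computed through
   the coefficients, since on each cell v^2 is a polynomial whose
   coefficients are differentiable in time. *)

Section CellIntegral.
Variables (R : realType) (N : nat) (xn : nat -> R) (j : 'I_N).

Lemma cint_integrable (f : R -> R) : continuous f ->
  lebesgue_measure.-integrable `[xn j, xn j.+1] (EFin \o f).
Proof.
move=> cf; apply: continuous_compact_integrable; first exact: segment_compact.
exact: continuous_subspaceT.
Qed.

Lemma cintD (f g : R -> R) : continuous f -> continuous g ->
  cint xn j (fun x => f x + g x) = cint xn j f + cint xn j g.
Proof. by move=> cf cg; rewrite /cint RintegralD //; apply: cint_integrable. Qed.

Lemma cintZ (f : R -> R) (r : R) : continuous f ->
  cint xn j (fun x => r * f x) = r * cint xn j f.
Proof. by move=> cf; rewrite /cint RintegralZl //; apply: cint_integrable. Qed.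

Lemma cint_sum n (F : 'I_n -> R -> R) : (forall i, continuous (F i)) ->
  cint xn j (fun x => \sum_(i < n) F i x) = \sum_(i < n) cint xn j (F i).
Proof.
move=> cF; suff [_ <-] : continuous (\sum_(i < n) F i) /\
    cint xn j (\sum_(i < n) F i) = \sum_(i < n) cint xn j (F i).
  by congr cint; apply/funext => x; rewrite fct_sumE.
apply: (big_ind2 (fun f r => continuous f /\ cint xn j f = r)) => //.
  by split; [exact: cst_continuous | rewrite /cint Rintegral_cst // mul0r].
move=> f _ g _ [cf <-] [cg <-].
split; first by move=> x; apply: continuousD; [exact: cf | exact: cg].
exact: cintD.
Qed.

Lemma cint_horner n (P : {poly R}) : (size P <= n)%N ->
  cint xn j (fun x => P.[x]) = \sum_(k < n) P`_k * cint xn j (fun x => x ^+ k).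
Proof.
move=> szP; under eq_fun do rewrite (horner_coef_wide _ szP).
rewrite cint_sum; last by move=> k x; apply: cvgM; [exact: cvg_cst | exact: exprn_continuous].
by apply: eq_bigr => k _; rewrite cintZ //; exact: exprn_continuous.
Qed.

End CellIntegral.

Section CoefficientwiseDerivative.
Variables (R : realType) (t : R).

Definition is_coef_derive (P : R -> {poly R}) (P' : {poly R}) : Prop :=
  forall k, is_derive t 1 (fun s => (P s)`_k) P'`_k.

Lemma is_derive_coef_lincomb n (P : R -> {poly R}) (P' : {poly R}) (a : nat -> R) :
  is_coef_derive P P' ->
  is_derive t 1 (fun s => \sum_(k < n) (P s)`_k * a k) (\sum_(k < n) P'`_k * a k).
Proof.
move=> dP; have -> : (fun s => \sum_(k < n) (P s)`_k * a k) =
    \sum_(k < n) (fun s => (P s)`_k * a k) by apply/funext => s; rewrite fct_sumE.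
apply: is_derive_sum => k.
apply: is_derive_eq (is_deriveM (dP k) (is_derive_cst (a k) t 1)) _.
by rewrite /GRing.scale /= mulr0 add0r mulrC.
Qed.

Lemma is_coef_deriveM (P Q : R -> {poly R}) (P' Q' : {poly R}) :
  is_coef_derive P P' -> is_coef_derive Q Q' ->
  is_coef_derive (fun s => P s * Q s) (P' * Q t + P t * Q').
Proof.
move=> dP dQ k; have -> : (fun s => (P s * Q s)`_k) =
    \sum_(i < k.+1) (fun s => (P s)`_i * (Q s)`_(k - i)%N).
  by apply/funext => s; rewrite fct_sumE coefM.
rewrite coefD !coefM -big_split /=; apply: is_derive_sum => i.
apply: is_derive_eq (is_deriveM (dP i) (dQ (k - i)%N)) _.
by rewrite addrC; congr (_ + _); exact: mulrC.
Qed.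

Definition coef_derive1 n (P : R -> {poly R}) : {poly R} :=
  \poly_(k < n) derive1 (fun s => (P s)`_k) t.

Lemma is_coef_derive1 n (P : R -> {poly R}) :
  (forall s, (size (P s) <= n)%N) -> (forall k, derivable (fun s => (P s)`_k) t 1) ->
  is_coef_derive P (coef_derive1 n P).
Proof.
move=> szP dP k; rewrite coef_poly; case: ltnP => [_|nk].
  by rewrite derive1E; exact: derivableP.
have -> : (fun s => (P s)`_k) = cst 0.
  by apply/funext => s; rewrite nth_default // (leq_trans (szP s)).
exact: is_derive_cst.
Qed.

Lemma is_derive_horner n (P : R -> {poly R}) (P' : {poly R}) (x : R) :
  (forall s, (size (P s) <= n)%N) -> (size P' <= n)%N -> is_coef_derive P P' ->
  is_derive t 1 (fun s => (P s).[x]) P'.[x].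
Proof.
move=> szP szP' dP; have -> : (fun s => (P s).[x]) = (fun s => \sum_(k < n) (P s)`_k * x ^+ k).
  by apply/funext => s; rewrite (horner_coef_wide x (szP s)).
by rewrite (horner_coef_wide x szP'); exact: is_derive_coef_lincomb.
Qed.

Lemma is_derive_cint_horner N (xn : nat -> R) (j : 'I_N) n
    (P : R -> {poly R}) (P' : {poly R}) :
  (forall s, (size (P s) <= n)%N) -> (size P' <= n)%N -> is_coef_derive P P' ->
  is_derive t 1 (fun s => cint xn j (fun x => (P s).[x])) (cint xn j (fun x => P'.[x])).
Proof.
move=> szP szP' dP; have -> : (fun s => cint xn j (fun x => (P s).[x])) =
    (fun s => \sum_(k < n) (P s)`_k * cint xn j (fun x => x ^+ k)).
  by apply/funext => s; rewrite (cint_horner xn j (szP s)).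
rewrite (cint_horner xn j szP').
exact: (is_derive_coef_lincomb n (fun k => cint xn j (fun x => x ^+ k)) dP).
Qed.

End CoefficientwiseDerivative.

Lemma size_polyM_le (R : nzSemiRingType) n (p q : {poly R}) :
  (size p <= n)%N -> (size q <= n)%N -> (size (p * q)%R <= n + n)%N.
Proof.
move=> szp szq; apply: leq_trans (size_polyMleq p q) _.
exact: leq_trans (leq_pred _) (leq_add szp szq).
Qed.

Section TimeDerivativeOnCells.
Variables (R : realType) (N : nat) (xn : nat -> R) (t : R) (n : nat) (V : R -> {poly R}).
Hypothesis szV : forall s, (size (V s) <= n)%N.
Hypothesis dV : forall k, derivable (fun s => (V s)`_k) t 1.

Let V' := coef_derive1 t n V.

Let dV' : is_coef_derive t V V'.
Proof. exact: is_coef_derive1. Qed.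

Lemma derive1_horner_coef_derive1 x : derive1 (fun s => (V s).[x]) t = V'.[x].
Proof.
by rewrite derive1E; apply: derive_val; apply: is_derive_horner szV (size_poly _ _) dV'.
Qed.

Lemma is_derive_cint_sqr_half (j : 'I_N) :
  is_derive t 1 (fun s => cint xn j (fun x => (V s).[x] ^+ 2 / 2))
    (cint xn j (fun x => derive1 (fun s => (V s).[x]) t * (V t).[x])).
Proof.
have -> : (fun s => cint xn j (fun x => (V s).[x] ^+ 2 / 2)) =
    (fun s => 2^-1 * cint xn j (fun x => (V s * V s).[x])).
  apply/funext => s; rewrite -cintZ; last exact: continuous_horner.
  by congr cint; apply/funext => x; rewrite hornerM expr2 mulrC.
have szV'V : (size (V' * V t + V t * V')%R <= n + n)%N.
  by rewrite (leq_trans (size_polyD _ _)) // geq_max !size_polyM_le // size_poly.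
have szVV s : (size (V s * V s)%R <= n + n)%N by apply: size_polyM_le.
apply: is_derive_eq
  (is_deriveZ _ (is_derive_cint_horner xn j szVV szV'V (is_coef_deriveM dV' dV'))) _.
rewrite /GRing.scale /= -cintZ; last exact: continuous_horner.
congr cint; apply/funext => x.
by rewrite derive1_horner_coef_derive1 hornerD !hornerM; field.
Qed.

End TimeDerivativeOnCells.

Lemma continuous_horner_sqr_half (R : realType) (P : {poly R}) :
  continuous (fun x => P.[x] ^+ 2 / 2).
Proof.
have -> : (fun x => P.[x] ^+ 2 / 2) = horner (P ^+ 2 * (2^-1)%:P).
  by apply/funext => x; rewrite hornerM horner_exp hornerC.
exact: continuous_horner.
Qed.

Lemma is_derive_energy (R : realType) (N : nat) (xn : nat -> R) (n : nat)
    (v w : R -> 'I_N -> {poly R}) (t : R) :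
  (forall s j, (size (v s j) <= n)%N) -> (forall s j, (size (w s j) <= n)%N) ->
  (forall j k, derivable (fun s => (v s j)`_k) t 1) ->
  (forall j k, derivable (fun s => (w s j)`_k) t 1) ->
  is_derive t 1 (energy xn v w)
    (\sum_(j < N) (cint xn j (fun x => dt v t j x * (v t j).[x])
                  + cint xn j (fun x => dt w t j x * (w t j).[x]))).
Proof.
move=> szv szw dv dw; have -> : energy xn v w = \sum_(j < N) (fun s =>
    cint xn j (fun x => (v s j).[x] ^+ 2 / 2) + cint xn j (fun x => (w s j).[x] ^+ 2 / 2)).
  apply/funext => s; rewrite fct_sumE; apply: eq_bigr => j _.
  rewrite -cintD; try exact: continuous_horner_sqr_half.
  by congr cint; apply/funext => x; rewrite mulrDl.
apply: is_derive_sum => j; apply: is_deriveD.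
  exact: (is_derive_cint_sqr_half xn (szv^~ j) (dv j)).
exact: (is_derive_cint_sqr_half xn (szw^~ j) (dw j)).
Qed.

Lemma continuous_cspeed (R : realType) (alpha beta : R) : continuous (cspeed alpha beta).
Proof.
have csqr (g : R -> R) x : {for x, continuous g} -> {for x, continuous (fun y => g y ^+ 2)}.
  move=> cg; apply: (@continuous_comp _ _ _ g (fun z => z ^+ 2) _ cg).
  exact: exprn_continuous.
move=> x; apply: (@continuous_comp _ _ _ (fun y => alpha * cos y ^+ 2 + beta * sin y ^+ 2)).
  apply: continuousD; apply: continuousM; try exact: cst_continuous.
    by apply: csqr; exact: continuous_cos.
  by apply: csqr; exact: continuous_sin.
exact: sqrt_continuous.
Qed.

Lemma cint_mul_derivM (R : realType) (N : nat) (xn : nat -> R) (j : 'I_N)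
    (f : R -> R) (P Q : {poly R}) : continuous f ->
  cint xn j (fun x => f x * (deriv (P * Q)).[x])
  = cint xn j (fun x => f x * P.[x] * (deriv Q).[x])
    + cint xn j (fun x => f x * Q.[x] * (deriv P).[x]).
Proof.
move=> cf; have cfPQ (A B : {poly R}) : continuous (fun x => f x * A.[x] * B.[x]).
  by move=> x; apply: cvgM; [apply: cvgM |]; exact: continuous_horner || exact: cf.
rewrite -cintD //; congr cint; apply/funext => x.
by rewrite derivM hornerD !hornerM; ring.
Qed.

Lemma big_ord_pred_shift (V : nmodType) (N : nat) (F : 'I_N -> 'I_N -> V) :
  \sum_(j < N) F (ord_pred j) j = \sum_(i < N) F i (ordS i).
Proof.
by rewrite (reindex_inj (@ordS_inj N)); apply: eq_bigr => i _; rewrite ordSK.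
Qed.

Section InterfaceFluxes.
Variables (R : realType) (N : nat) (xn : nat -> R) (cb s : 'I_N -> R).
Variables (v w : 'I_N -> {poly R}).

Lemma interface_terms_dissipation :
  let Fv i := cb i * avg xn w i + 1 / 2 * s i * jump xn v i in
  let Fw i := cb i * avg xn v i + 1 / 2 * s i * jump xn w i in
  \sum_(j < N) Fv j * (v j).[xn j.+1] - \sum_(j < N) Fv (ord_pred j) * (v j).[xn j]
  - \sum_(j < N) cb j * (w j).[xn j.+1] * (v j).[xn j.+1]
  + \sum_(j < N) cb (ord_pred j) * (w j).[xn j] * (v j).[xn j]
  + \sum_(j < N) Fw j * (w j).[xn j.+1] - \sum_(j < N) Fw (ord_pred j) * (w j).[xn j]
  = - \sum_(i < N) 1 / 2 * s i * (jump xn v i ^+ 2 + jump xn w i ^+ 2).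
Proof.
move=> Fv Fw.
rewrite (big_ord_pred_shift (fun i j => Fv i * (v j).[xn j])).
rewrite (big_ord_pred_shift (fun i j => cb i * (w j).[xn j] * (v j).[xn j])).
rewrite (big_ord_pred_shift (fun i j => Fw i * (w j).[xn j])).
rewrite -sumrB -sumrB -big_split -big_split -sumrB -sumrN /=.
by apply: eq_bigr => i _; rewrite /Fv /Fw /avg /jump /trp /trm; field.
Qed.

End InterfaceFluxes.

Lemma sspeed_ge0 (R : realType) (alpha beta : R) (N : nat) (xn : nat -> R)
    (psi : 'I_N -> {poly R}) (i : 'I_N) :
  0 <= sspeed alpha beta xn psi i.
Proof. by rewrite le_max sqrtr_ge0. Qed.

Lemma eps_ge0 (R : realType) (alpha beta C theta : R) (N : nat) (xn : nat -> R)
    (v w psi : R -> 'I_N -> {poly R}) (t : R) (j : 'I_N) :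
  0 <= C -> xn j <= xn j.+1 -> 0 <= eps alpha beta C theta xn v w psi t j.
Proof.
move=> C_ge0 xn_le; rewrite /eps /dx; apply: divr_ge0.
  by rewrite !mulr_ge0 ?sqrtr_ge0 // subr_ge0.
by rewrite addr_ge0 ?sqrtr_ge0 ?powR_ge0.
Qed.

Lemma cint_sqr_ge0 (R : realType) (N : nat) (xn : nat -> R) (j : 'I_N) (f : R -> R) :
  0 <= cint xn j (fun x => f x * f x).
Proof. by apply: Rintegral_ge0 => // x _; rewrite -expr2 sqr_ge0. Qed.

Theorem proposition2p4 (R : realType) (alpha beta C theta T : R) (p N : nat)
  (xn : nat -> R) (v w psi : R -> 'I_N -> {poly R}) :
  0 < alpha -> 0 < beta -> 0 < C -> 1 / 2 <= theta ->
  (forall k : nat, (k < N)%N -> xn k < xn k.+1) ->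
  (forall t, inX p (v t)) -> (forall t, inX p (w t)) -> (forall t, inX p (psi t)) ->
  (forall t, 0 <= t <= T -> forall (j : 'I_N) (k : nat),
     derivable (fun s => (v s j)`_k) t 1 /\
     derivable (fun s => (w s j)`_k) t 1 /\
     derivable (fun s => (psi s j)`_k) t 1) ->
  (forall t, 0 <= t <= T -> forall phi : 'I_N -> {poly R}, inX p phi ->
     let c := cspeed alpha beta in
     let Fv := fun i => cbar alpha beta xn (psi t) i * avg xn (w t) i
                        + 1 / 2 * sspeed alpha beta xn (psi t) i * jump xn (v t) i in
     \sum_(j < N) cint xn j (fun x => dt v t j x * (phi j).[x])
     + \sum_(j < N) cint xn j (fun x => c (psi t j).[x] * (w t j).[x] * (deriv (phi j)).[x])
     - \sum_(j < N) Fv j * (phi j).[xn j.+1]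
     + \sum_(j < N) Fv (ord_pred j) * (phi j).[xn j]
     = \sum_(j < N) cint xn j (fun x => c (psi t j).[x] * (deriv (w t j * phi j)).[x])
       - \sum_(j < N) cbar alpha beta xn (psi t) j * (w t j).[xn j.+1] * (phi j).[xn j.+1]
       + \sum_(j < N) cbar alpha beta xn (psi t) (ord_pred j) * (w t j).[xn j] * (phi j).[xn j]
       - \sum_(j < N) eps alpha beta C theta xn v w psi t j
                      * cint xn j (fun x => (deriv (v t j)).[x] * (deriv (phi j)).[x])) ->
  (forall t, 0 <= t <= T -> forall eta : 'I_N -> {poly R}, inX p eta ->
     let c := cspeed alpha beta in
     let Fw := fun i => cbar alpha beta xn (psi t) i * avg xn (v t) i
                        + 1 / 2 * sspeed alpha beta xn (psi t) i * jump xn (w t) i in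
     \sum_(j < N) cint xn j (fun x => dt w t j x * (eta j).[x])
     + \sum_(j < N) cint xn j (fun x => c (psi t j).[x] * (v t j).[x] * (deriv (eta j)).[x])
     - \sum_(j < N) Fw j * (eta j).[xn j.+1]
     + \sum_(j < N) Fw (ord_pred j) * (eta j).[xn j]
     = - \sum_(j < N) eps alpha beta C theta xn v w psi t j
                      * cint xn j (fun x => (deriv (w t j)).[x] * (deriv (eta j)).[x])) ->
  (forall t, 0 <= t <= T -> forall zeta : 'I_N -> {poly R}, inX p zeta ->
     \sum_(j < N) cint xn j (fun x => dt psi t j x * (zeta j).[x])
     = \sum_(j < N) cint xn j (fun x => (v t j).[x] * (zeta j).[x])) ->
  forall t, 0 <= t <= T ->
    derivable (energy xn v w) t 1 /\ derive1 (energy xn v w) t <= 0.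
Proof.
(* c >= 0 holds for any alpha, beta since Num.sqrt is nonnegative, and theta
   only scales eps, which is nonnegative anyway. *)
move=> _ _ C_gt0 _ xn_lt v_in w_in _ hder hv hw _ t ht.
have dv j k := (hder t ht j k).1.
have dw j k := (hder t ht j k).2.1.
have Henergy := is_derive_energy xn v_in w_in dv dw.
split; first by case: Henergy.
rewrite derive1E derive_val big_split /=.
have := hv t ht (v t) (v_in t); have := hw t ht (w t) (w_in t) => /= Hw Hv.
have cpsi j : continuous (fun x => cspeed alpha beta (psi t j).[x]).
  by move=> x; apply: continuous_comp; [exact: continuous_horner | exact: continuous_cspeed].
rewrite (eq_bigr _ (fun j _ => cint_mul_derivM xn j (w t j) (v t j) (cpsi j))) in Hv.
rewrite big_split /= in Hv.
have := interface_terms_dissipation xn (cbar alpha beta xn (psi t))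
  (sspeed alpha beta xn (psi t)) (v t) (w t) => /= Hflux.
have jumps_ge0 : 0 <= \sum_(i < N) 1 / 2 * sspeed alpha beta xn (psi t) i
    * (jump xn (v t) i ^+ 2 + jump xn (w t) i ^+ 2).
  by apply: sumr_ge0 => i _; rewrite !mulr_ge0 ?addr_ge0 ?sqr_ge0 ?sspeed_ge0.
have viscosity_ge0 (u : R -> 'I_N -> {poly R}) : 0 <= \sum_(j < N)
    eps alpha beta C theta xn v w psi t j
    * cint xn j (fun x => (deriv (u t j)).[x] * (deriv (u t j)).[x]).
  apply: sumr_ge0 => j _; rewrite mulr_ge0 ?cint_sqr_ge0 // eps_ge0 ?ltW //.
  exact: xn_lt.
have := viscosity_ge0 v; have := viscosity_ge0 w.
lra.
Qed.
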